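(* Let $s$ be a positive integer and let $a_0\ge a_1\ge\cdots\ge a_t\ge1$ be integers with $\sum_{i=0}^t a_i=s^2$. Let $$g=2\sum_{i=0}^t\sqrt{a_i}-2s.$$ Then $g\ge 2t\big(1-\frac1s\big)$. Moreover, if $a_0\ge a_1\ge 36$, then $g\ge 2t\big(1-\frac1s\big)+4$. *)

From Stdlib Require Import Reals Lra Lia.

(* The gap h(x) = sqrt x - 1 - (x - 1)/(s + 1) between sqrt and its chord
   over [1, s^2] is nonnegative there, and the constraint sum a_i = s^2 turns
   g into 2 sum h(a_i) + 2 t s/(s + 1) >= 2 t (1 - 1/s).  When a_0 >= a_1 >= 36
   the two largest terms alone already contribute h(a_0) + h(a_1) >= 2. *)

From Stdlib Require Import Reals Lra Lia.
Open Scope R_scope.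

Lemma sum_f_R0_le_mono (f : nat -> R) (m n : nat) :
  (forall i, (i <= n)%nat -> 0 <= f i) -> (m <= n)%nat ->
  sum_f_R0 f m <= sum_f_R0 f n.
Proof.
  induction n as [|n IHn]; intros Hf Hmn.
  - replace m with 0%nat by lia; lra.
  - destruct (Nat.eq_dec m (S n)) as [->|Hm]; [lra|].
    simpl; assert (IH := IHn (fun i Hi => Hf i ltac:(lia)) ltac:(lia)).
    assert (Hn := Hf (S n) (le_n _)); lra.
Qed.

Lemma term_le_sum_f_R0 (f : nat -> R) (i n : nat) :
  (forall k, (k <= n)%nat -> 0 <= f k) -> (i <= n)%nat ->
  f i <= sum_f_R0 f n.
Proof.
  intros Hf Hin; apply Rle_trans with (sum_f_R0 f i);
    [|exact (sum_f_R0_le_mono f i n Hf Hin)].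
  destruct i as [|i]; simpl; [lra|].
  assert (H0 := sum_f_R0_le_mono f 0 i (fun k Hk => Hf k ltac:(lia)) ltac:(lia)).
  assert (Hf0 := Hf 0%nat ltac:(lia)); simpl in H0; lra.
Qed.

Definition sqrt_chord_gap (s x : R) : R := sqrt x - 1 - (x - 1) / (s + 1).

Lemma sqrt_chord_gap_factor (s x : R) : 0 <= x -> s + 1 <> 0 ->
  sqrt_chord_gap s x = (sqrt x - 1) * (s - sqrt x) / (s + 1).
Proof.
  intros Hx Hs; unfold sqrt_chord_gap.
  rewrite <- (sqrt_sqrt x Hx) at 2; field; exact Hs.
Qed.

Lemma sqrt_chord_gap_ge0 (s x : R) : 0 <= s -> 1 <= x -> x <= s ^ 2 ->
  0 <= sqrt_chord_gap s x.
Proof.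
  intros Hs H1 Hx; rewrite sqrt_chord_gap_factor by lra.
  assert (Hr := sqrt_pos x); assert (Hrr := sqrt_sqrt x ltac:(lra)).
  assert (1 <= sqrt x) by nra; assert (sqrt x <= s) by nra.
  apply Rmult_le_pos; [nra | left; apply Rinv_0_lt_compat; lra].
Qed.

(* Writing p = u + v, the sum below is (s + 1) p - (u^2 + v^2) - 2 s; either
   p >= s + 3, or u^2 + v^2 = p^2 - 2 u v is small since u v >= 6 p - 36. *)
Lemma chord_gap_pair_bound (s u v : R) : 0 <= s ->
  6 <= v -> v <= u -> u * u + v * v <= s ^ 2 ->
  2 * (s + 1) <= (u - 1) * (s - u) + (v - 1) * (s - v).
Proof.
  intros Hs Hv Hvu Hq.
  assert (Huv : u * v >= 6 * (u + v) - 36) by nra.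
  destruct (Rle_lt_dec (s + 3) (u + v)) as [Hp|Hp].
  - assert ((s + 1) * (u + v) >= (s + 1) * (s + 3)) by nra; nra.
  - assert (0 <= (u + v - 4) * (s - (u + v - 3))) by (apply Rmult_le_pos; lra).
    nra.
Qed.

Lemma sqrt_chord_gap_pair (s x y : R) : 0 <= s ->
  36 <= y -> y <= x -> x + y <= s ^ 2 ->
  2 <= sqrt_chord_gap s x + sqrt_chord_gap s y.
Proof.
  intros Hs Hy Hyx Hxy.
  rewrite !sqrt_chord_gap_factor by lra.
  assert (Hu := sqrt_sqrt x ltac:(lra)); assert (Hv := sqrt_sqrt y ltac:(lra)).
  assert (Hv6 : 6 <= sqrt y).
  { rewrite <- (sqrt_square 6) by lra; apply sqrt_le_1_alt; nra. }
  assert (Hvu : sqrt y <= sqrt x) by (apply sqrt_le_1_alt; lra).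
  assert (Hpair := chord_gap_pair_bound s (sqrt x) (sqrt y) Hs Hv6 Hvu
                     ltac:(rewrite Hu, Hv; lra)).
  apply Rmult_le_reg_r with (s + 1); [lra|].
  match goal with |- _ <= ?rhs => replace rhs
    with ((sqrt x - 1) * (s - sqrt x) + (sqrt y - 1) * (s - sqrt y)) by (field; lra) end.
  lra.
Qed.

Lemma sum_sqrt_chord_gap (s : R) (x : nat -> R) (n : nat) : s + 1 <> 0 ->
  sum_f_R0 (fun i => sqrt_chord_gap s (x i)) n =
  sum_f_R0 (fun i => sqrt (x i)) n - INR (S n) - (sum_f_R0 x n - INR (S n)) / (s + 1).
Proof.
  intros Hs; induction n as [|n IHn]; simpl sum_f_R0.
  - unfold sqrt_chord_gap; simpl; field; exact Hs.
  - rewrite IHn, (S_INR (S n)); unfold sqrt_chord_gap; field; exact Hs.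
Qed.

Lemma mul_one_sub_inv_le (t s : R) : 0 <= t -> 1 <= s ->
  t * (1 - 1 / s) <= t * s / (s + 1).
Proof.
  intros Ht Hs.
  replace (t * s / (s + 1)) with (t * (1 - 1 / s) + t / (s * (s + 1))) by (field; lra).
  assert (0 <= t / (s * (s + 1)))
    by (apply Rmult_le_pos; [lra | left; apply Rinv_0_lt_compat; nra]).
  lra.
Qed.

Theorem lemma4p3 (s t : nat) (a : nat -> nat)
  (hs : (1 <= s)%nat)
  (hmono : forall i, (i < t)%nat -> (a (S i) <= a i)%nat)
  (hpos : forall i, (i <= t)%nat -> (1 <= a i)%nat)
  (hsum : sum_f_R0 (fun i => INR (a i)) t = INR s ^ 2) :
  let g := 2 * sum_f_R0 (fun i => sqrt (INR (a i))) t - 2 * INR s in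
  g >= 2 * INR t * (1 - 1 / INR s) /\
  ((1 <= t)%nat -> (36 <= a 1%nat)%nat ->
     g >= 2 * INR t * (1 - 1 / INR s) + 4).
Proof.
  intro g.
  assert (Hs : 1 <= INR s) by (apply (le_INR 1); lia).
  set (h := fun i => sqrt_chord_gap (INR s) (INR (a i))).
  assert (Ha_le : forall i, (i <= t)%nat -> INR (a i) <= INR s ^ 2).
  { intros i Hi; rewrite <- hsum.
    apply (term_le_sum_f_R0 (fun k => INR (a k))); [intros; apply pos_INR | exact Hi]. }
  assert (Hh : forall i, (i <= t)%nat -> 0 <= h i).
  { intros i Hi; apply sqrt_chord_gap_ge0; [lra | apply (le_INR 1), hpos, Hi | auto]. }
  assert (Hg : g = 2 * sum_f_R0 h t + 2 * INR t * INR s / (INR s + 1)).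
  { unfold g, h; rewrite sum_sqrt_chord_gap, hsum, S_INR by lra; field; lra. }
  assert (Hslack := mul_one_sub_inv_le (INR t) (INR s) (pos_INR t) Hs).
  split.
  - assert (Hh0t : sum_f_R0 h 0 <= sum_f_R0 h t)
      by (apply sum_f_R0_le_mono; [exact Hh | lia]).
    assert (Hh0 := Hh 0%nat ltac:(lia)); simpl in Hh0t; lra.
  - intros Ht H36.
    assert (Hh01 : sum_f_R0 h 1 <= sum_f_R0 h t) by (apply sum_f_R0_le_mono; [exact Hh | lia]).
    assert (Ha01 : INR (a 0%nat) + INR (a 1%nat) <= INR s ^ 2).
    { rewrite <- hsum.
      apply (sum_f_R0_le_mono (fun k => INR (a k)) 1 t); [intros; apply pos_INR | exact Ht]. }
    assert (Hpair : 2 <= h 0%nat + h 1%nat).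
    { apply sqrt_chord_gap_pair; [lra | | | exact Ha01].
      - apply (le_INR 36) in H36; simpl in H36; lra.
      - apply le_INR, hmono; lia. }
    simpl in Hh01; lra.
Qed.
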